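(* Consider the $Z_1$-Game on a tree $T$, at a position where at least one vertex is filled. Then, without spending any further tokens (using only the filling rule and the oracle operation), the player can, regardless of the oracle's responses, reach a position in which either all vertices are filled or there is exactly one filled vertex adjacent to two or more unfilled vertices.
   Context: Filling rule: if a filled vertex has exactly one unfilled neighbor (and any number of filled neighbors), that neighbor becomes filled; ''applying the filling rule in a subgraph $H$'' means applying it with neighborhoods taken in $H$. The $Z_q$-Game on $G$ ($q\ge 0$ an integer): initially all vertices are unfilled; a player repeatedly performs one of the following operations until all vertices are filled: (1) for one token, change any vertex from unfilled to filled; (2) at no cost, apply the filling rule in $G$; (3) if $F$ is the current set of filled vertices and $U_1,\dots,U_k$ are the vertex sets of the connected components of $G[V(G)\setminus F]$ with $k\ge q+1$, the player announces a selection of at least $q+1$ of the $U_i$ to an oracle (an adversary), the oracle returns a nonempty subset $\{U_{i_1},\dots,U_{i_\ell}\}$ of the selected components, and the player may at no cost apply the filling rule in $G[F\cup U_{i_1}\cup\cdots\cup U_{i_\ell}]$. The $Z_1$-Game is the case $q=1$. *)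

From mathcomp Require Import all_boot.
Set Implicit Arguments. Unset Strict Implicit. Unset Printing Implicit Defensive.

Section ZqGame.
Variables (T : finType) (e : rel T).

Definition simple_graph := symmetric e /\ irreflexive e.

Definition acyclic := forall c : seq T, uniq c -> 2 < size c -> ~~ cycle e c.
Definition connected := forall x y : T, connect e x y.
Definition is_tree := simple_graph /\ connected /\ acyclic.

Definition erestr (F : {set T}) : rel T :=
  [rel x y | [&& e x y, x \notin F & y \notin F]].

Definition comp (F : {set T}) (u : T) : {set T} :=
  [set w | (u \notin F) && connect (erestr F) u w].

Definition comps (F : {set T}) : {set {set T}} := [set comp F u | u in ~: F].

(* one application of the filling rule in G[W] (W is a superset of F):
   a filled v with exactly one unfilled neighbour u in G[W] fills u. *)
Definition fstep (W F F' : {set T}) : Prop :=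
  exists v u, [/\ v \in F, u \in W, u \notin F & e v u] /\
     (forall w, w \in W -> w \notin F -> e v w -> w = u) /\ F' = u |: F.

Inductive fsteps (W : {set T}) : {set T} -> {set T} -> Prop :=
| fsteps_refl F : fsteps W F F
| fsteps_step F F' F'' : fstep W F F' -> fsteps W F' F'' -> fsteps W F F''.

(* zq_free_reach q Goal F : in the Z_q-Game, from position F (F = set of
   filled vertices), the player can, using only the free operations (2)
   and (3) and regardless of the oracle's answers, reach a position
   satisfying Goal. *)
Inductive zq_free_reach (q : nat) (Goal : {set T} -> Prop) : {set T} -> Prop :=
| zr_goal F : Goal F -> zq_free_reach q Goal F
| zr_fill F F' : fstep setT F F' -> zq_free_reach q Goal F' -> zq_free_reach q Goal F
| zr_oracle F (S : {set {set T}}) :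
    S \subset comps F -> q < #|S| ->
    (forall R : {set {set T}}, R \subset S -> R != set0 ->
       exists F', fsteps (F :|: cover R) F F' /\ zq_free_reach q Goal F') ->
    zq_free_reach q Goal F.

Definition prop32_goal (F : {set T}) : Prop :=
  F = setT \/ #|[set v in F | 1 < #|[set w in ~: F | e v w]| ]| = 1.

End ZqGame.

From Pilot Require Import Defs.
From mathcomp Require Import all_boot zify.
Set Implicit Arguments. Unset Strict Implicit. Unset Printing Implicit Defensive.

(* Induct on the number of unfilled vertices.  A filled vertex with exactly
   one unfilled neighbour forces it for free.  Otherwise every filled vertex on
   the boundary has at least two unfilled neighbours, and if there are two such
   vertices v and w we use the oracle.  Since T is a tree, distinct unfilled
   neighbours of a filled vertex lie in distinct components of T - F, and v is
   adjacent to at most one of the components C1, C2 of two neighbours y1, y2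
   of w; say v has no neighbour in C2.  Query the oracle with C2 and the
   component of a neighbour x of v: if the answer contains the latter, x is the
   only unfilled neighbour of v in the chosen subgraph; otherwise the answer is
   {C2} and y2 is the only neighbour of w in it. *)

Section TreeComponents.
Variables (T : finType) (e : rel T).
Hypothesis esym : symmetric e.

Lemma erestr_sym (F : {set T}) : symmetric (erestr e F).
Proof. by move=> x y; rewrite /erestr /= esym; case: (x \in F); case: (y \in F). Qed.

Lemma path_erestr_unfilled (F : {set T}) x p :
  path (erestr e F) x p -> all (fun y => y \notin F) p.
Proof. by elim: p x => //= y p IH x /andP[/and3P[_ _ ->] /IH]. Qed.

Lemma connect_erestr_unfilled (F : {set T}) x y :
  x \notin F -> connect (erestr e F) x y -> y \notin F.
Proof.
move=> xF /connectP[p /path_erestr_unfilled p_unf ->].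
have xp_unf : all (fun y => y \notin F) (x :: p) by rewrite /= xF.
exact: (allP xp_unf _ (mem_last x p)).
Qed.

Lemma connect_erestrS (F F' : {set T}) x y :
  F' \subset F -> connect (erestr e F) x y -> connect (erestr e F') x y.
Proof.
move=> sF'F; apply: connect_sub => a b /and3P[eab aF bF]; apply: connect1.
by rewrite /erestr /= eab !(contra (subsetP sF'F _)).
Qed.

Lemma mem_comp (F : {set T}) u z :
  (z \in Defs.comp e F u) = (u \notin F) && connect (erestr e F) u z.
Proof. by rewrite inE. Qed.

Lemma comp_unfilled (F : {set T}) u z : z \in Defs.comp e F u -> z \notin F.
Proof. by rewrite mem_comp => /andP[/connect_erestr_unfilled]; apply. Qed.

Hypothesis eacy : acyclic e.

(* A path between u1 and u2 avoiding v would close a cycle through v. *)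
Lemma nbrs_not_connected (F : {set T}) v u1 u2 :
  v \in F -> e v u1 -> e v u2 -> u1 \notin F -> u1 != u2 ->
  ~~ connect (erestr e F) u1 u2.
Proof.
move=> vF evu1 evu2 u1F u1u2; apply/negP => /connectP[p].
case/shortenP=> p' p'_path p'_uniq _ {p} u2_last.
have u1p'_unf : all (fun y => y \notin F) (u1 :: p').
  by rewrite /= u1F (path_erestr_unfilled p'_path).
have v_notin : v \notin u1 :: p'.
  by apply: contraL vF => /(allP u1p'_unf).
have size_gt2 : 2 < size (v :: u1 :: p').
  by case: p' {p'_path p'_uniq u1p'_unf v_notin} u2_last => // /= u2E;
     rewrite u2E eqxx in u1u2.
have := eacy (c := v :: u1 :: p'); rewrite cons_uniq v_notin p'_uniq.
move=> /(_ isT size_gt2) /negP; apply.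
rewrite /cycle rcons_path /= evu1 -u2_last esym evu2 andbT.
by apply: sub_path p'_path => a b /and3P[].
Qed.

Lemma nbr_in_comp_unique (F : {set T}) v u z :
  v \in F -> e v u -> e v z -> z \in Defs.comp e F u -> z = u.
Proof.
move=> vF evu evz; rewrite mem_comp => /andP[uF uz].
apply/eqP; rewrite eq_sym; apply: contraLR uz => uz.
exact: (nbrs_not_connected vF evu evz).
Qed.

(* The path a - y1 - w - y2 - b avoids v in G - (F \ w), closing a cycle through v. *)
Lemma no_two_filled_share_two_comps (F : {set T}) v w y1 y2 a b :
  v \in F -> w \in F -> v != w -> e w y1 -> e w y2 -> y1 != y2 ->
  a \in Defs.comp e F y1 -> b \in Defs.comp e F y2 -> e v a -> e v b -> False.
Proof.
move=> vF wF vw ewy1 ewy2 y1y2 aC bC eva evb.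
move: (aC) (bC); rewrite !mem_comp => /andP[y1F y1a] /andP[y2F y2b].
have csym := sym_connect_sym (erestr_sym F).
have ab : a != b.
  apply/eqP => ab; apply/negP: (nbrs_not_connected wF ewy1 ewy2 y1F y1y2); apply/negPn.
  by apply: connect_trans y1a _; rewrite csym ab.
set F' := F :\ w.
have sF'F : F' \subset F by apply: subsetDl.
have unfF' z : z \notin F -> z \notin F' by apply: contra; apply: subsetP.
have wF' : w \notin F' by rewrite in_setD1 eqxx.
have w_edge y : e w y -> y \notin F -> erestr e F' w y.
  by rewrite /erestr /= wF' => -> /unfF' ->.
have ab_conn : connect (erestr e F') a b.
  apply: (connect_trans (y := y1)).
    by rewrite (sym_connect_sym (erestr_sym F')); apply: connect_erestrS y1a.
  apply: (connect_trans (y := w)); first by rewrite connect1 // erestr_sym w_edge.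
  by apply: connect_trans (connect1 (w_edge _ ewy2 y2F)) (connect_erestrS sF'F y2b).
have vF' : v \in F' by rewrite in_setD1 vw.
have aF' := unfF' _ (comp_unfilled aC).
by move: (nbrs_not_connected vF' eva evb aF' ab); rewrite ab_conn.
Qed.

Lemma one_nbr_comp_avoids (F : {set T}) v w y1 y2 :
  v \in F -> w \in F -> v != w -> e w y1 -> e w y2 -> y1 != y2 ->
  {in Defs.comp e F y1, forall z, ~~ e v z} \/ {in Defs.comp e F y2, forall z, ~~ e v z}.
Proof.
move=> vF wF vw ewy1 ewy2 y1y2.
have [/forall_inP|/forall_inPn[a aC /negbNE eva]] :=
  boolP [forall (z | z \in Defs.comp e F y1), ~~ e v z]; first by left.
have [/forall_inP|/forall_inPn[b bC /negbNE evb]] :=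
  boolP [forall (z | z \in Defs.comp e F y2), ~~ e v z]; first by right.
by case: (no_two_filled_share_two_comps vF wF vw ewy1 ewy2 y1y2 aC bC eva evb).
Qed.

End TreeComponents.

Lemma exists_boundary_edge (T : finType) (e : rel T) (F : {set T}) a b :
  a \in F -> b \notin F -> connect e a b ->
  exists x y, [/\ x \in F, y \notin F & e x y].
Proof.
move=> + bF /connectP[p + bE]; elim: p a bE => [a /= bE aF|c p IH a bE aF] /=.
  by rewrite bE aF in bF.
case/andP=> eac pc; have [cF|cF] := boolP (c \in F); first exact: (IH c bE cF pc).
by exists a, c.
Qed.

Section ZOneReach.
Variables (T : finType) (e : rel T).
Hypotheses (esym : symmetric e) (eacy : acyclic e).

Lemma fsteps_fill_unique (W F : {set T}) v u :
  v \in F -> u \in W -> u \notin F -> e v u ->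
  (forall z, z \in W -> z \notin F -> e v z -> z = u) ->
  fsteps e W F (u |: F).
Proof.
move=> vF uW uF evu u_unique.
by apply: fsteps_step (fsteps_refl e W _); exists v, u.
Qed.

Lemma reach_by_oracle (G : {set T} -> Prop) (F : {set T}) v x w y :
  v \in F -> w \in F -> e v x -> x \notin F -> e w y -> y \notin F ->
  {in Defs.comp e F y, forall z, ~~ e v z} ->
  (forall u, u \notin F -> zq_free_reach e 1 G (u |: F)) ->
  zq_free_reach e 1 G F.
Proof.
move=> vF wF evx xF ewy yF v_avoids IH.
set Cx := Defs.comp e F x; set Cy := Defs.comp e F y.
have xCx : x \in Cx by rewrite mem_comp xF connect0.
have yCy : y \in Cy by rewrite mem_comp yF connect0.
have CxCy : Cx != Cy.
  by apply: contraTneq evx => CxE; apply: v_avoids; move: xCx; rewrite CxE.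
apply: (@zr_oracle _ _ _ _ _ [set Cx; Cy]).
- by apply/subsetP => C; rewrite !inE => /orP[]/eqP->; apply: imset_f; rewrite inE.
- by rewrite cards2 CxCy.
move=> R /subsetP sRS R0.
have mem_R C : C \in R -> C = Cx \/ C = Cy.
  by move/sRS; rewrite !inE => /orP[]/eqP->; [left|right].
have in_cover z C : C \in R -> z \in C -> z \in F :|: cover R.
  by move=> CR zC; rewrite inE; apply/orP; right; apply/bigcupP; exists C.
have cover_comp z : z \in F :|: cover R -> z \notin F -> exists2 C, C \in R & z \in C.
  by rewrite inE => /orP[->//|/bigcupP[C CR zC]] _; exists C.
have [CxR|CxR] := boolP (Cx \in R).
  exists (x |: F); split; last exact: IH.
  apply: (fsteps_fill_unique vF (in_cover _ _ CxR xCx) xF evx) => z /cover_comp zR zF evz.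
  case: (zR zF) => C /mem_R[]-> zC; first exact: nbr_in_comp_unique evz zC.
  by move: (v_avoids z zC); rewrite evz.
have CyR : Cy \in R.
  case/set0Pn: R0 => C CR; case: (mem_R C CR) => CE; move: CR; rewrite CE // => CR.
  by rewrite CR in CxR.
exists (y |: F); split; last exact: IH.
apply: (fsteps_fill_unique wF (in_cover _ _ CyR yCy) yF ewy) => z /cover_comp zR zF ewz.
case: (zR zF) => C CR; case: (mem_R C CR) => CE zC; first by rewrite -CE CR in CxR.
rewrite CE in zC.
exact: nbr_in_comp_unique ewz zC.
Qed.

Definition unfilled_nbrs (F : {set T}) v := [set u in ~: F | e v u].

Definition branch_vertices (F : {set T}) := [set v in F | 1 < #|unfilled_nbrs F v|].

Lemma mem_unfilled_nbrs (F : {set T}) v u :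
  (u \in unfilled_nbrs F v) = (u \notin F) && e v u.
Proof. by rewrite !inE. Qed.

Lemma reach_of_two_branch_vertices (G : {set T} -> Prop) (F : {set T}) v w :
  v \in branch_vertices F -> w \in branch_vertices F -> v != w ->
  (forall u, u \notin F -> zq_free_reach e 1 G (u |: F)) ->
  zq_free_reach e 1 G F.
Proof.
rewrite !inE => /andP[vF /card_gt1P[x [_ [xN _ _]]]].
move=> /andP[wF /card_gt1P[y1 [y2 [y1N y2N y1y2]]]] vw IH.
move: xN y1N y2N; rewrite !mem_unfilled_nbrs.
move=> /andP[xF evx] /andP[y1F ewy1] /andP[y2F ewy2].
case: (one_nbr_comp_avoids esym eacy vF wF vw ewy1 ewy2 y1y2) => v_avoids.
- exact: (reach_by_oracle vF wF evx xF ewy1 y1F v_avoids IH).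
- exact: (reach_by_oracle vF wF evx xF ewy2 y2F v_avoids IH).
Qed.

Hypothesis econn : connected e.

Lemma reach_prop32_of_reach_fill (F : {set T}) : F != set0 ->
  (forall u, u \notin F -> zq_free_reach e 1 (prop32_goal e) (u |: F)) ->
  zq_free_reach e 1 (prop32_goal e) F.
Proof.
move=> /set0Pn[a aF] IH.
have [->|FT] := eqVneq F setT; first by apply: zr_goal; left.
have /subsetPn[b _ bF] : ~~ ([set: T] \subset F).
  by apply: contra FT => TF; rewrite eqEsubset subsetT TF.
have [v /andP[vF /cards1P[u uE]]|no_single] :=
  pickP [pred v | (v \in F) && (#|unfilled_nbrs F v| == 1)].
  have : u \in unfilled_nbrs F v by rewrite uE set11.
  rewrite mem_unfilled_nbrs => /andP[uF evu].
  apply: zr_fill (IH u uF); exists v, u; split=> //; split=> // z _ zF evz.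
  by apply/set1P; rewrite -uE mem_unfilled_nbrs zF.
have [B1|B_ne1] := eqVneq #|branch_vertices F| 1; first by apply: zr_goal; right.
have [x [y [xF yF exy]]] := exists_boundary_edge aF bF (econn a b).
have xB : x \in branch_vertices F.
  have : 0 < #|unfilled_nbrs F x|.
    by apply/card_gt0P; exists y; rewrite mem_unfilled_nbrs yF.
  by move: (no_single x) => /=; rewrite !inE xF /= => /negbT; lia.
have B_gt0 : 0 < #|branch_vertices F| by apply/card_gt0P; exists x.
have /card_gt1P[v [w [vB wB vw]]] : 1 < #|branch_vertices F| by lia.
exact: reach_of_two_branch_vertices vB wB vw IH.
Qed.

End ZOneReach.

Theorem proposition3p2 (T : finType) (e : rel T) :
  is_tree e ->
  forall F : {set T}, F != set0 ->
    zq_free_reach e 1 (prop32_goal e) F.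
Proof.
move=> [[esym _] [econn eacy]] F.
have [n ltFn] := ubnP #|~: F|; elim: n => // n IHn in F ltFn *.
move=> F0; apply: reach_prop32_of_reach_fill => // u uF.
apply: IHn; last by apply/set0Pn; exists u; rewrite setU11.
have := cardsC F; have := cardsC (u |: F); rewrite cardsU1 uF; lia.
Qed.
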